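(* Let $K$ be a field, $R=K[x_1,\dots,x_n]$, $\boldsymbol{\lambda}=(\lambda_1,\dots,\lambda_n)$ a vector of positive integers, $L=\mathrm{lcm}(\lambda_1,\dots,\lambda_n)$, $\omega_i=L/\lambda_i$, $\boldsymbol{\omega}=(\omega_1,\dots,\omega_n)$, and $\Gamma=\{\boldsymbol{\alpha}\in\mathbb{N}^n\mid \boldsymbol{\omega}\cdot\boldsymbol{\alpha}\ge L\}$. The following are equivalent: (a) $I(\boldsymbol{\lambda})$ is normal; (b) whenever $\boldsymbol{\alpha}\in\mathbb{N}^n$ and $p$ is a positive integer with $\boldsymbol{\omega}\cdot\boldsymbol{\alpha}\ge pL$, there exist $\boldsymbol{\beta}_1,\dots,\boldsymbol{\beta}_p\in\Gamma$ with $\boldsymbol{\alpha}=\sum_{j=1}^p\boldsymbol{\beta}_j$; (c) whenever $\boldsymbol{\alpha}=(a_1,\dots,a_n)\in\mathbb{N}^n$ with $a_i<\lambda_i$ for all $i$ and $p$ is an integer with $1\le p<n$ and $\boldsymbol{\omega}\cdot\boldsymbol{\alpha}\ge pL$, there exist $\boldsymbol{\beta}_1,\dots,\boldsymbol{\beta}_p\in\Gamma$ with $\boldsymbol{\alpha}=\sum_{j=1}^p\boldsymbol{\beta}_j$.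
   Context: $J(\boldsymbol{\lambda})=(x_1^{\lambda_1},\dots,x_n^{\lambda_n})$ and $I(\boldsymbol{\lambda})=\overline{J(\boldsymbol{\lambda})}$ is its integral closure in $R$; the set $\Gamma$ is exactly the set of exponent vectors of monomials in $I(\boldsymbol{\lambda})$. An ideal is normal if all its positive powers are integrally closed. *)

From HB Require Import structures.
From mathcomp Require Import all_boot all_order all_algebra.
From mathcomp Require Import mpoly.
Set Implicit Arguments. Unset Strict Implicit. Unset Printing Implicit Defensive.
Import GRing.Theory.
Local Open Scope ring_scope.

Section Ideals.
Variable R : comNzRingType.

Definition ideal_gen (S : R -> Prop) (f : R) : Prop :=
  exists (m : nat) (c s : 'I_m -> R),
    (forall j, S (s j)) /\ f = \sum_(j < m) c j * s j.

Definition ideal_mul (I J : R -> Prop) : R -> Prop :=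
  ideal_gen (fun h => exists a b, [/\ I a, J b & h = a * b]).

Fixpoint ideal_pow (I : R -> Prop) (k : nat) : R -> Prop :=
  match k with
  | 0 => fun _ => True
  | k'.+1 => ideal_mul (ideal_pow I k') I
  end.

Definition integral_over_ideal (I : R -> Prop) (f : R) : Prop :=
  exists (m : nat) (a : nat -> R),
    [/\ (0 < m)%N,
        (forall i, (1 <= i <= m)%N -> ideal_pow I i (a i)) &
        f ^+ m + \sum_(1 <= i < m.+1) a i * f ^+ (m - i) = 0].

Definition int_closure (I : R -> Prop) : R -> Prop := integral_over_ideal I.

Definition integrally_closed (I : R -> Prop) : Prop :=
  forall f, int_closure I f -> I f.

Definition normal_ideal (I : R -> Prop) : Prop :=
  forall k, (0 < k)%N -> integrally_closed (ideal_pow I k).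

End Ideals.

Definition Jlam (K : fieldType) (n : nat) (lam : 'I_n -> nat) : {mpoly K[n]} -> Prop :=
  ideal_gen (fun f : {mpoly K[n]} => exists i : 'I_n, f = 'X_i ^+ lam i).

Definition Ilam (K : fieldType) (n : nat) (lam : 'I_n -> nat) : {mpoly K[n]} -> Prop :=
  int_closure (@Jlam K n lam).

Definition lcm_lam (n : nat) (lam : 'I_n -> nat) : nat := \big[lcmn/1%N]_(i < n) lam i.
Definition omega (n : nat) (lam : 'I_n -> nat) (i : 'I_n) : nat := (lcm_lam lam %/ lam i)%N.
Definition wdot (n : nat) (lam : 'I_n -> nat) (alpha : 'I_n -> nat) : nat :=
  (\sum_(i < n) omega lam i * alpha i)%N.
Definition Gamma (n : nat) (lam : 'I_n -> nat) (alpha : 'I_n -> nat) : Prop :=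
  (lcm_lam lam <= wdot lam alpha)%N.
Definition decomposable (n : nat) (lam : 'I_n -> nat) (alpha : 'I_n -> nat) (p : nat) : Prop :=
  exists beta : 'I_p -> 'I_n -> nat,
    (forall j, Gamma lam (beta j)) /\ (forall i, alpha i = \sum_(j < p) beta j i)%N.

From HB Require Import structures.
From mathcomp Require Import all_boot all_order all_algebra.
From mathcomp Require Import mpoly.
Set Implicit Arguments. Unset Strict Implicit. Unset Printing Implicit Defensive.
Import GRing.Theory.

(* Substituting x_i |-> x_i t^(omega_i) and taking the t-adic order gives a
   valuation-like weighted degree; the generators x_i^(lam_i) have weight L, so
   every element of the integral closure of I(lam)^p has all its monomials of
   weight >= pL.  Conversely, if omega . a >= pL then (x^a)^L is a product of
   pL generators, so x^a is integral over I(lam)^p.  On the other hand every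
   monomial of I(lam)^p dominates a sum of p elements of Gamma, and such a sum
   gives a monomial of I(lam)^p.  So normality of I(lam) says exactly that every
   a with omega . a >= pL splits into p elements of Gamma.
   For (c) => (b), repeatedly split off lam_i e_i, which lies in Gamma, from a
   coordinate with a_i >= lam_i; once all a_i < lam_i we have omega . a < nL,
   which forces p < n. *)

Section IdealArithmetic.
Local Open Scope ring_scope.
Variable R : comNzRingType.
Implicit Types (S I : R -> Prop) (f g s : R).

Lemma ideal_gen0 S : ideal_gen S 0.
Proof. by exists 0%N, (fun _ => 0), (fun _ => 0); split; [case | rewrite big_ord0]. Qed.

Lemma ideal_gen_sub S s : S s -> ideal_gen S s.
Proof. by move=> Ss; exists 1%N, (fun _ => 1), (fun _ => s); rewrite big_ord1 mul1r. Qed.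

Lemma ideal_genD S f g : ideal_gen S f -> ideal_gen S g -> ideal_gen S (f + g).
Proof.
move=> [k [c [s [Ss ->]]]] [l [d [t [St ->]]]].
pose glue T (u : 'I_k -> T) (v : 'I_l -> T) j :=
  match split j with inl i => u i | inr i => v i end.
exists (k + l)%N, (glue _ c d), (glue _ s t); split.
  by move=> j; rewrite /glue; case: split.
rewrite big_split_ord /glue; congr (_ + _); apply: eq_bigr => i _.
  by rewrite (unsplitK (inl _)).
by rewrite (unsplitK (inr _)).
Qed.

Lemma ideal_genMl S r f : ideal_gen S f -> ideal_gen S (r * f).
Proof.
move=> [k [c [s [Ss ->]]]]; exists k, (fun j => r * c j), s; split => //.
by rewrite mulr_sumr; apply: eq_bigr => j _; rewrite mulrA.
Qed.

Lemma ideal_gen_sum S (J : Type) (r : seq J) (P : pred J) (F : J -> R) :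
  (forall j, P j -> ideal_gen S (F j)) -> ideal_gen S (\sum_(j <- r | P j) F j).
Proof.
move=> SF; apply: (big_ind (ideal_gen S)) => //; [exact: ideal_gen0 | exact: ideal_genD].
Qed.

Lemma ideal_powMl I k r g : ideal_pow I k g -> ideal_pow I k (r * g).
Proof. by case: k => // k; exact: ideal_genMl. Qed.

Lemma ideal_powS_mul I k f g : ideal_pow I k f -> I g -> ideal_pow I k.+1 (f * g).
Proof. by move=> If Ig; apply: ideal_gen_sub; exists f, g. Qed.

Lemma ideal_pow_prod I k (s : seq R) :
  (forall x, x \in s -> I x) -> (k <= size s)%N -> ideal_pow I k (\prod_(x <- s) x).
Proof.
elim: s k => [|x s IHs] [|k] //= Is le_ks.
rewrite big_cons mulrC; apply: ideal_powS_mul; last by apply: Is; rewrite mem_head.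
by apply: IHs => // y sy; apply: Is; rewrite inE sy orbT.
Qed.

Lemma ideal_pow_pow_prod I k l (s : seq R) :
  (forall x, x \in s -> I x) -> (k * l <= size s)%N ->
  ideal_pow (ideal_pow I k) l (\prod_(x <- s) x).
Proof.
elim: l s => [//|l IHl] s Is le_kls.
have le_ks : (k <= size s)%N by apply: leq_trans le_kls; rewrite leq_pmulr.
rewrite -(cat_take_drop k s) big_cat /= mulrC; apply: ideal_powS_mul.
  apply: IHl => [x /mem_drop|]; first exact: Is.
  by rewrite size_drop leq_subRL // -mulnS.
by apply: ideal_pow_prod => [x /mem_take|]; [exact: Is | rewrite size_take_min leq_min leqnn].
Qed.

Lemma int_closure_of_pow I m f : (0 < m)%N -> ideal_pow I m (f ^+ m) -> int_closure I f.
Proof.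
move=> m_gt0 Ifm; exists m, (fun i => if i == m then - f ^+ m else 0); split => //.
  move=> [//|i] _; case: eqP => [->|_]; last exact: ideal_gen0.
  by rewrite -mulN1r; exact: ideal_powMl.
rewrite big_nat_recr //= eqxx subnn expr0 mulr1 big1_seq ?add0r ?subrr //.
by move=> i /andP[_]; rewrite mem_index_iota => /andP[_ im]; rewrite (ltn_eqF im) mul0r.
Qed.

Lemma int_closure_sub I f : I f -> int_closure I f.
Proof.
by move=> If; apply: (@int_closure_of_pow _ 1) => //; rewrite expr1 -[f]mul1r; apply: ideal_powS_mul.
Qed.

End IdealArithmetic.

Section XnDivisibility.
Local Open Scope ring_scope.
Variable S : idomainType.
Implicit Types p q : {poly S}.

Definition Xn_divides (c : nat) p : Prop := exists q, p = q * 'X^c.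

Lemma Xn_dividesP c p : Xn_divides c p <-> forall j, (j < c)%N -> p`_j = 0.
Proof.
split=> [[q ->] j lt_jc|p_lt]; first by rewrite coefMXn lt_jc.
exists (drop_poly c p); rewrite -[LHS](poly_take_drop c) [take_poly c p](_ : _ = 0) ?add0r //.
by apply/polyP => j; rewrite coef_take_poly coef0; case: ifP => // /p_lt.
Qed.

Lemma Xn_divides0 c : Xn_divides c 0.
Proof. by exists 0; rewrite mul0r. Qed.

Lemma Xn_dividesD c p q : Xn_divides c p -> Xn_divides c q -> Xn_divides c (p + q).
Proof. by move=> [p' ->] [q' ->]; exists (p' + q'); rewrite mulrDl. Qed.

Lemma Xn_dividesMl c p q : Xn_divides c q -> Xn_divides c (p * q).
Proof. by move=> [q' ->]; exists (p * q'); rewrite mulrA. Qed.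

Lemma Xn_dividesM a b p q :
  Xn_divides a p -> Xn_divides b q -> Xn_divides (a + b) (p * q).
Proof.
by move=> [p' ->] [q' ->]; exists (p' * q'); rewrite exprD mulrACA.
Qed.

Lemma Xn_dividesX c k p : Xn_divides c p -> Xn_divides (k * c) (p ^+ k).
Proof. by move=> [q ->]; exists (q ^+ k); rewrite exprMn -exprM mulnC. Qed.

Lemma Xn_dividesW a b p : (b <= a)%N -> Xn_divides a p -> Xn_divides b p.
Proof.
by move=> le_ba [q ->]; exists (q * 'X^(a - b)); rewrite -mulrA -exprD subnK.
Qed.

Lemma Xn_divides_lowest p j : p`_j != 0 ->
  exists2 d, (d <= j)%N & exists2 q, p = q * 'X^d & q`_0 != 0.
Proof.
move=> pj_neq0; have ex_nz : exists j, p`_j != 0 by exists j.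
case: (ex_minnP ex_nz) => d pd_neq0 d_min; exists d; first exact: d_min.
have [q def_p] : Xn_divides d p.
  by apply/Xn_dividesP => i lt_id; apply/eqP; apply: contraTT lt_id => /d_min; rewrite -leqNgt.
by exists q => //; rewrite def_p coefMXn ltnn subnn in pd_neq0.
Qed.

End XnDivisibility.

Section XnDivisibilityPullback.
Local Open Scope ring_scope.
Variables (R : comNzRingType) (S : idomainType) (phi : {rmorphism R -> {poly S}}).
Implicit Types (T I : R -> Prop).

Lemma ideal_gen_Xn_divides c T : (forall s, T s -> Xn_divides c (phi s)) ->
  forall g, ideal_gen T g -> Xn_divides c (phi g).
Proof.
move=> Tc g [k [a [s [Ts ->]]]]; rewrite rmorph_sum.
apply: (big_ind (Xn_divides c)); [exact: Xn_divides0 | exact: Xn_dividesD |].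
by move=> j _; rewrite rmorphM; apply/Xn_dividesMl/Tc.
Qed.

Lemma ideal_pow_Xn_divides c I : (forall g, I g -> Xn_divides c (phi g)) ->
  forall k g, ideal_pow I k g -> Xn_divides (k * c) (phi g).
Proof.
move=> Ic; elim=> [|k IHk] g; first by exists (phi g); rewrite mulr1.
apply: ideal_gen_Xn_divides => _ [a [b [Ia Ib ->]]].
by rewrite rmorphM mulSn addnC; apply: Xn_dividesM; [exact: IHk | exact: Ic].
Qed.

(* If [f] is integral over [I] but [X^d] is the exact power of [X] dividing [phi f],
   with [d < c], then in the integral equation the term [f^m] has a non-zero
   coefficient at [X^(m d)], while every other term is divisible by [X^(m d + 1)]. *)
Lemma int_closure_Xn_divides c I : (forall g, I g -> Xn_divides c (phi g)) ->
  forall f, int_closure I f -> Xn_divides c (phi f).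
Proof.
move=> Ic f [m [a [m_gt0 Ia eq0]]]; apply/Xn_dividesP => j lt_jc.
apply/eqP; apply: contraT => fj_neq0.
have [d le_dj [q phi_f q0_neq0]] := Xn_divides_lowest fj_neq0.
have lt_dc : (d < c)%N := leq_ltn_trans le_dj lt_jc.
have lead_term : (phi (f ^+ m))`_(m * d) = q`_0 ^+ m.
  by rewrite rmorphXn phi_f exprMn -exprM mulnC coefMXn ltnn subnn -!horner_coef0 horner_exp.
have tail_terms : Xn_divides (m * d).+1 (phi (\sum_(1 <= i < m.+1) a i * f ^+ (m - i))).
  rewrite rmorph_sum big_seq; apply: (big_ind (Xn_divides _)).
  - exact: Xn_divides0.
  - exact: Xn_dividesD.
  move=> i; rewrite mem_index_iota ltnS => /andP[i_gt0 le_im].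
  have phi_ai := ideal_pow_Xn_divides Ic (Ia i (introT andP (conj i_gt0 le_im))).
  have phi_fmi : Xn_divides ((m - i) * d) (phi (f ^+ (m - i))).
    by rewrite rmorphXn; apply: Xn_dividesX; exists q.
  rewrite rmorphM; apply: Xn_dividesW (Xn_dividesM phi_ai phi_fmi).
  rewrite -{1}(subnKC le_im) mulnDl ltn_add2r ltn_mul2l lt_dc andbT.
  by case: (i) i_gt0.
have := congr1 (fun g => (phi g)`_(m * d)) eq0.
rewrite /= rmorphD coefD lead_term (proj1 (Xn_dividesP _ _) tail_terms) // addr0.
by rewrite rmorph0 coef0 => /eqP; rewrite expf_eq0 (negbTE q0_neq0) andbF.
Qed.

End XnDivisibilityPullback.

Section MonomialSupport.
Local Open Scope ring_scope.
Variables (K : comNzRingType) (n : nat).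
Implicit Types (f g : {mpoly K[n]}) (Q : 'X_{1..n} -> Prop).

Definition msupp_all Q g : Prop := forall m, m \in msupp g -> Q m.

Lemma msuppM_split f g m : m \in msupp (f * g) ->
  exists m1 m2, [/\ m1 \in msupp f, m2 \in msupp g & m = (m1 + m2)%MM].
Proof. by move=> /msuppM_le /allpairsP [[m1 m2] [/= fm1 gm2 ->]]; exists m1, m2. Qed.

Lemma ideal_gen_msupp_all Q (T : {mpoly K[n]} -> Prop) :
  (forall m m', Q m -> Q (m + m')%MM) -> (forall s, T s -> msupp_all Q s) ->
  forall g, ideal_gen T g -> msupp_all Q g.
Proof.
move=> upQ TQ g [k [a [s [Ts ->]]]] m /msupp_sum_le /flattenP [ms /mapP [j _ ->]].
by move=> /msuppM_split [m1 [m2 [_ sm2 ->]]]; rewrite addmC; apply: upQ; exact: TQ (Ts j) _ sm2.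
Qed.

End MonomialSupport.

Section WeightedDegree.
Local Open Scope ring_scope.
Variables (K : idomainType) (n : nat) (w : 'I_n -> nat).
Implicit Types (f g : {mpoly K[n]}) (m : 'X_{1..n}).

Definition mweight m : nat := \sum_(i < n) w i * m i.

Definition mweight_ge (c : nat) : {mpoly K[n]} -> Prop :=
  msupp_all (fun m => c <= mweight m)%N.

Lemma mweightD m1 m2 : mweight (m1 + m2) = (mweight m1 + mweight m2)%N.
Proof. by rewrite -big_split; apply: eq_bigr => i _; rewrite mnmDE mulnDr. Qed.

Definition weight_subst : {rmorphism {mpoly K[n]} -> {poly {mpoly K[n]}}} :=
  mmap (polyC \o mpolyC n (R := K)) (fun i => ('X_i)%:P * 'X^(w i)).

Lemma weight_subst_X i : weight_subst 'X_i = ('X_i)%:P * 'X^(w i).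
Proof. by rewrite /= mmapX mmap1U. Qed.

Lemma weight_subst_monomial m :
  mmap1 (fun i => ('X_i : {mpoly K[n]})%:P * 'X^(w i)) m = ('X_[m])%:P * 'X^(mweight m).
Proof.
rewrite /mmap1 (eq_bigr (fun i => ('X_i ^+ m i)%:P * 'X^(w i * m i))).
  by rewrite big_split /= -rmorph_prod -mpolyXE_id -prodrXr.
by move=> i _; rewrite exprMn rmorphXn -exprM.
Qed.

Lemma coef_weight_subst g j :
  (weight_subst g)`_j = \sum_(m <- msupp g | mweight m == j) g@_m *: 'X_[m].
Proof.
rewrite /= /mmap coef_sum [RHS]big_mkcond; apply: eq_bigr => m _.
rewrite weight_subst_monomial mulrA [(_ \o _) _]/= -polyCM coefCM coefXn mul_mpolyC eq_sym.
by case: eqP; rewrite ?mulr1 ?mulr0.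
Qed.

Lemma Xn_divides_weight_subst c g : Xn_divides c (weight_subst g) <-> mweight_ge c g.
Proof.
rewrite Xn_dividesP; split=> [low m gm|wg j lt_jc].
  rewrite leqNgt; apply/negP => /low /(congr1 (mcoeff m)).
  rewrite coef_weight_subst raddf_sum big_mkcond (bigD1_seq m) ?msupp_uniq //= eqxx.
  rewrite mcoeffZ mcoeffX eqxx mulr1 big1 ?addr0 => [gm0|m' /negbTE m'm].
    by move: gm; rewrite mcoeff_msupp gm0 mcoeff0 eqxx.
  by case: ifP; rewrite ?mcoeffZ ?mcoeffX ?m'm ?mulr0 ?mcoeff0.
rewrite coef_weight_subst big1_seq // => m /andP[/eqP wm /wg].
by rewrite wm leqNgt lt_jc.
Qed.

Lemma ideal_pow_mweight_ge c (I : {mpoly K[n]} -> Prop) :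
  (forall g, I g -> mweight_ge c g) -> forall k g, ideal_pow I k g -> mweight_ge (k * c) g.
Proof.
move=> Ic k g /ideal_pow_Xn_divides; rewrite -Xn_divides_weight_subst; apply.
by move=> h /Ic /Xn_divides_weight_subst.
Qed.

Lemma int_closure_mweight_ge c (I : {mpoly K[n]} -> Prop) :
  (forall g, I g -> mweight_ge c g) -> forall f, int_closure I f -> mweight_ge c f.
Proof.
move=> Ic f /int_closure_Xn_divides; rewrite -Xn_divides_weight_subst; apply.
by move=> h /Ic /Xn_divides_weight_subst.
Qed.

End WeightedDegree.

Section GammaDecompositions.
Variables (n : nat) (lam : 'I_n -> nat).
Local Notation L := (lcm_lam lam).
Implicit Types (al be : 'I_n -> nat).

Definition decomposition_property : Prop :=
  forall al p, 0 < p -> p * L <= wdot lam al -> decomposable lam al p.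

Definition small_decomposition_property : Prop :=
  forall al p, (forall i, al i < lam i) -> 1 <= p < n ->
  p * L <= wdot lam al -> decomposable lam al p.

Definition Gamma_sum_le al (p : nat) : Prop :=
  exists be : 'I_p -> 'I_n -> nat,
    (forall j, Gamma lam (be j)) /\ (forall i, \sum_(j < p) be j i <= al i).

Lemma dvdn_lcm_lam i : lam i %| L.
Proof. exact: biglcmn_sup. Qed.

Lemma omegaK i : omega lam i * lam i = L.
Proof. by rewrite divnK // dvdn_lcm_lam. Qed.

Lemma wdotD al be : wdot lam (fun i => al i + be i) = wdot lam al + wdot lam be.
Proof. by rewrite -big_split; apply: eq_bigr => i _; rewrite mulnDr. Qed.

Definition lam_unit (i : 'I_n) (j : 'I_n) : nat := if j == i then lam i else 0.

Lemma wdot_lam_unit i : wdot lam (lam_unit i) = L.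
Proof.
rewrite /wdot (bigD1 i) //= /lam_unit eqxx omegaK big1 ?addn0 // => j /negbTE ->.
by rewrite muln0.
Qed.

Lemma Gamma_lam_unit i : Gamma lam (lam_unit i).
Proof. by rewrite /Gamma wdot_lam_unit. Qed.

Lemma Gamma_mono al be : Gamma lam al -> (forall i, al i <= be i) -> Gamma lam be.
Proof.
move=> Gal le_al_be; apply: leq_trans Gal _.
by apply: leq_sum => i _; rewrite leq_mul2l le_al_be orbT.
Qed.

Lemma Gamma_sum_le_mono al be p :
  Gamma_sum_le al p -> (forall i, al i <= be i) -> Gamma_sum_le be p.
Proof. by move=> [ga [Gga le_ga]] le_al_be; exists ga; split=> // i; apply: leq_trans (le_al_be i). Qed.

Lemma Gamma_sum_le0 al : Gamma_sum_le al 0.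
Proof. by exists (fun _ _ => 0); split=> [[]|i]; rewrite // big_ord0. Qed.

Lemma Gamma_sum_leS al be p :
  Gamma_sum_le al p -> Gamma lam be -> Gamma_sum_le (fun i => al i + be i) p.+1.
Proof.
move=> [ga [Gga le_ga]] Gbe.
exists (fun j => if unlift ord_max j is Some j' then ga j' else be); split.
  by move=> j; case: unlift.
move=> i; rewrite big_ord_recr /= unlift_none leq_add2r; apply: leq_trans (le_ga i).
apply/eq_leq/eq_bigr => j _.
by rewrite (_ : widen_ord _ j = lift ord_max j) ?liftK //; exact/val_inj/esym/lift_max.
Qed.

Lemma decomposable_Gamma_sum_le al p : decomposable lam al p -> Gamma_sum_le al p.
Proof. by move=> [be [Gbe al_sum]]; exists be; split=> // i; rewrite al_sum. Qed.

(* The excess of [al] over the sum is absorbed by the last summand. *)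
Lemma Gamma_sum_le_decomposable al p : Gamma_sum_le al p.+1 -> decomposable lam al p.+1.
Proof.
move=> [be [Gbe le_be]].
pose ex i := al i - \sum_(j < p.+1) be j i.
exists (fun j i => be j i + (j == ord_max) * ex i); split.
  by move=> j; apply: Gamma_mono (Gbe j) _ => i; rewrite leq_addr.
move=> i; rewrite big_split /= [X in _ + X](bigD1 ord_max) //= eqxx mul1n.
by rewrite [X in _ + (_ + X)]big1 ?addn0 ?subnKC // => j /negbTE ->.
Qed.

Hypothesis lam_gt0 : forall i, 0 < lam i.

Lemma lcm_lam_gt0 : 0 < L.
Proof. by apply: (big_ind (leq 1)) => // a b; rewrite lcmn_gt0 => -> ->. Qed.

Lemma omega_mul_lt i a : a < lam i -> omega lam i * a < L.
Proof.
move=> lt_a; rewrite -(omegaK i) ltn_mul2l lt_a andbT.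
by move: lcm_lam_gt0; rewrite -(omegaK i) muln_gt0 => /andP[].
Qed.

Lemma wdot_small_lt al p : (forall i, al i < lam i) -> 0 < p ->
  p * L <= wdot lam al -> p < n.
Proof.
move=> al_lt p_gt0 le_pL.
have [i0 _|n_empty] := pickP (@predT 'I_n); last first.
  by move: le_pL; rewrite /wdot big_pred0 // leqn0 muln_eq0 (gtn_eqF p_gt0) (gtn_eqF lcm_lam_gt0).
rewrite -(ltn_pmul2r lcm_lam_gt0); apply: leq_ltn_trans le_pL _.
have -> : n * L = \sum_(i < n) L by rewrite sum_nat_const card_ord.
rewrite /wdot (bigD1 i0) //= [X in _ < X](bigD1 i0) //= -addSn.
by apply: leq_add; [|apply: leq_sum => i _; apply: ltnW]; apply: omega_mul_lt.
Qed.

Lemma small_decomposition_Gamma_sum_le al p :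
  small_decomposition_property -> p * L <= wdot lam al -> Gamma_sum_le al p.
Proof.
move=> small; elim: p al => [|p IHp] al le_pL; first exact: Gamma_sum_le0.
have [i le_lam_al|all_small] :=
  pickP [pred i | lam i <= al i]; last first.
  have al_lt i : al i < lam i by rewrite ltnNge; apply/negbT/all_small.
  by apply/decomposable_Gamma_sum_le/small; rewrite ?(wdot_small_lt al_lt _ le_pL).
pose al' j := al j - lam_unit i j.
have al_split j : al j = al' j + lam_unit i j.
  by rewrite subnK // /lam_unit; case: eqP => [->|].
have wdot_split : wdot lam al = wdot lam al' + L.
  by rewrite -(wdot_lam_unit i) -wdotD; apply: eq_bigr => j _; rewrite -al_split.
apply: Gamma_sum_le_mono (Gamma_sum_leS (IHp al' _) (Gamma_lam_unit i)) _.
  by move: le_pL; rewrite wdot_split mulSn addnC leq_add2r.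
by move=> j; rewrite -al_split.
Qed.

Lemma decomposition_property_of_small :
  small_decomposition_property -> decomposition_property.
Proof.
move=> small al [//|p] _ le_pL.
exact/Gamma_sum_le_decomposable/small_decomposition_Gamma_sum_le.
Qed.

End GammaDecompositions.

Section MonomialIdeal.
Local Open Scope ring_scope.
Variables (K : fieldType) (n : nat) (lam : 'I_n -> nat).
Hypothesis lam_gt0 : forall i, (0 < lam i)%N.
Local Notation L := (lcm_lam lam).
Local Notation J := (@Jlam K n lam).
Local Notation I := (@Ilam K n lam).
Implicit Types (al be : 'I_n -> nat).

Definition monomial al : {mpoly K[n]} := 'X_[[multinom al i | i < n]].

Lemma monomialE al : monomial al = \prod_(i < n) 'X_i ^+ al i.
Proof. by rewrite /monomial mpolyXE_id; apply: eq_bigr => i _; rewrite mnmE. Qed.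

Definition generator_seq al : seq {mpoly K[n]} :=
  flatten [seq nseq (omega lam i * al i) ('X_i ^+ lam i) | i <- index_enum 'I_n].

Lemma monomial_exp_lcm al : monomial al ^+ L = \prod_(x <- generator_seq al) x.
Proof.
rewrite monomialE /generator_seq big_flatten big_map -prodrXl; apply: eq_bigr => i _.
by rewrite big_nseq iter_mulr_1 -!exprM mulnA [(lam i * _)%N]mulnC omegaK mulnC.
Qed.

Lemma size_generator_seq al : size (generator_seq al) = wdot lam al.
Proof.
rewrite size_flatten /shape -map_comp sumnE big_map.
by apply: eq_bigr => i _; rewrite /= size_nseq.
Qed.

Lemma mem_generator_seq al x : x \in generator_seq al -> exists i, x = 'X_i ^+ lam i.
Proof. by move=> /flatten_mapP [i _ /nseqP [-> _]]; exists i. Qed.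

Lemma Jlam_generator i : J ('X_i ^+ lam i).
Proof. by apply: ideal_gen_sub; exists i. Qed.

Lemma Ilam_monomial be : Gamma lam be -> I (monomial be).
Proof.
move=> Gbe; apply: (int_closure_of_pow (lcm_lam_gt0 lam_gt0)); rewrite monomial_exp_lcm.
apply: ideal_pow_prod => [x /mem_generator_seq [i ->]|]; first exact: Jlam_generator.
by rewrite size_generator_seq.
Qed.

Lemma int_closure_pow_monomial al p :
  (p * L <= wdot lam al)%N -> int_closure (ideal_pow I p) (monomial al).
Proof.
move=> le_pL; apply: (int_closure_of_pow (lcm_lam_gt0 lam_gt0)); rewrite monomial_exp_lcm.
apply: ideal_pow_pow_prod => [x /mem_generator_seq [i ->]|].
  exact/int_closure_sub/Jlam_generator.
by rewrite size_generator_seq.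
Qed.

Lemma Ilam_mweight_ge g : I g -> mweight_ge (omega lam) L g.
Proof.
apply: int_closure_mweight_ge; apply: ideal_gen_msupp_all => [m m' le_Lm|_ [i ->]].
  by rewrite mweightD (leq_trans le_Lm) ?leq_addr.
apply/Xn_divides_weight_subst; exists (('X_i)%:P ^+ lam i).
by rewrite rmorphXn weight_subst_X exprMn -exprM omegaK.
Qed.

Lemma ideal_pow_Gamma_sum_le k g :
  ideal_pow I k g -> msupp_all (fun m => Gamma_sum_le lam (fun i => m i) k) g.
Proof.
elim: k g => [|k IHk] g; first by move=> _ m _; exact: Gamma_sum_le0.
apply: ideal_gen_msupp_all => [m m' Gm|_ [a [b [Ia Ib ->]]] m].
  by apply: Gamma_sum_le_mono Gm _ => i; rewrite mnmDE leq_addr.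
move=> /msuppM_split [m1 [m2 [am1 bm2 ->]]].
apply: Gamma_sum_le_mono (Gamma_sum_leS (IHk _ Ia _ am1) (Ilam_mweight_ge Ib bm2)) _.
by move=> i; rewrite mnmDE.
Qed.

Lemma ideal_pow_Xm_decomposable (m : 'X_{1..n}) p :
  decomposable lam (fun i => m i) p -> ideal_pow I p 'X_[m].
Proof.
move=> [be [Gbe m_sum]].
have -> : 'X_[m] = \prod_(x <- [seq monomial (be j) | j <- enum 'I_p]) x.
  rewrite big_map big_enum mpolyXE_id /=; under [RHS]eq_bigr do rewrite monomialE.
  by rewrite exchange_big; apply: eq_bigr => i _; rewrite m_sum prodrXr.
apply: ideal_pow_prod => [x /mapP [j _ ->]|]; first exact: Ilam_monomial.
by rewrite size_map size_enum_ord.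
Qed.

Lemma normal_decomposition : normal_ideal I -> decomposition_property lam.
Proof.
move=> normalI al [//|p] _ le_pL.
have Ial := normalI p.+1 isT _ (int_closure_pow_monomial le_pL).
have al_supp : [multinom al i | i < n] \in msupp (monomial al) by rewrite msuppX mem_seq1.
have Gal := ideal_pow_Gamma_sum_le Ial al_supp.
by apply/Gamma_sum_le_decomposable/(Gamma_sum_le_mono Gal) => i; rewrite mnmE.
Qed.

Lemma decomposition_normal : decomposition_property lam -> normal_ideal I.
Proof.
move=> decomp [//|k] _ f If.
have wf : mweight_ge (omega lam) (k.+1 * L) f.
  by apply: int_closure_mweight_ge If => g; apply: ideal_pow_mweight_ge => h; exact: Ilam_mweight_ge.
rewrite (mpolyE f) big_seq; apply: ideal_gen_sum => m fm; rewrite -mul_mpolyC.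
apply/ideal_genMl/(ideal_pow_Xm_decomposable (p := k.+1)).
exact: (decomp (fun i => m i) k.+1 isT (wf m fm)).
Qed.

End MonomialIdeal.

Unset Implicit Arguments.
Set Strict Implicit.

Theorem lemma4p3 (K : fieldType) (n : nat) (lam : 'I_n -> nat)
    (lam_pos : forall i, (0 < lam i)%N) :
  let a := normal_ideal (@Ilam K n lam) in
  let b := forall (alpha : 'I_n -> nat) (p : nat),
      (0 < p)%N -> (p * lcm_lam lam <= wdot lam alpha)%N -> decomposable lam alpha p in
  let c := forall (alpha : 'I_n -> nat) (p : nat),
      (forall i, alpha i < lam i)%N -> (1 <= p < n)%N ->
      (p * lcm_lam lam <= wdot lam alpha)%N -> decomposable lam alpha p in
  (a <-> b) /\ (b <-> c).
Proof.
move=> a b c; split; split.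
- exact: normal_decomposition.
- exact: decomposition_normal.
- by move=> decomp al p _ /andP[p_gt0 _]; exact: decomp.
- exact: decomposition_property_of_small.
Qed.
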